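(* Let $(\mathcal F,d)$ be a metric space, $\gamma\in(0,\infty]$, and $\Sigma=(\Sigma_M)_{M\in\mathbb N}$ a sequence of non-empty subsets of $\mathcal F$ which is $\gamma$-encodable in $(\mathcal F,d)$ (if $\gamma=\infty$: $\infty$-encodable). Then for every non-empty $\mathcal C\subset\mathcal F$, $$\min(\gamma^*(\mathcal C|\Sigma),\gamma)\le\gamma^*_e(\mathcal C).$$
   Context: Approximation speed: $\gamma^*(\mathcal C|\Sigma)=\sup\{\gamma\in\mathbb R:\sup_{f\in\mathcal C}\inf_{\Phi\in\Sigma_M}d(f,\Phi)=O(M^{-\gamma})\text{ as }M\to\infty\}\in[-\infty,\infty]$ ($\sup\emptyset=-\infty$). A finite $X\subset\mathcal C$ is an $\varepsilon$-covering of $\mathcal C$ if every point of $\mathcal C$ is within distance $\varepsilon$ of some point of $X$; $N(\mathcal C,d,\varepsilon)$ is the minimal size of an $\varepsilon$-covering ($+\infty$ if none), $H(\mathcal C,d,\varepsilon)=\log_2N(\mathcal C,d,\varepsilon)$, and the encoding speed is $\gamma^*_e(\mathcal C)=\sup\{\gamma>0:H(\mathcal C,d,\varepsilon)=O(\varepsilon^{-1/\gamma})\text{ as }\varepsilon\to0\}$ ($=0$ if the set is empty). For $\gamma,h>0$, a sequence $(\Sigma(\gamma,h)_M)_M$ is a $(\gamma,h)$-encoding of $\Sigma$ if there exist $c_1,c_2>0$ such that for every $M$, $\Sigma(\gamma,h)_M$ is a $c_1M^{-\gamma}$-covering of $\Sigma_M$ (in particular a finite subset of $\Sigma_M$) with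 $\log_2|\Sigma(\gamma,h)_M|\le c_2M^{1+h}$. $\Sigma$ is $\gamma$-encodable if it admits a $(\gamma,h)$-encoding for every $h>0$; it is $\infty$-encodable if it is $\gamma$-encodable for every $\gamma>0$. *)

From Stdlib Require Import Reals List ClassicalEpsilon.
From Coquelicot Require Import Coquelicot.
Open Scope R_scope.

Definition is_metric {F : Type} (d : F -> F -> R) : Prop :=
  (forall x y, 0 <= d x y) /\
  (forall x y, d x y = 0 <-> x = y) /\
  (forall x y, d x y = d y x) /\
  (forall x y z, d x z <= d x y + d y z).

Definition log2 (x : R) : R := ln x / ln 2.

Definition dist_to {F : Type} (d : F -> F -> R) (f : F) (S : F -> Prop) : Rbar :=
  Rbar_glb (fun r => exists Phi, S Phi /\ r = Finite (d f Phi)).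

Definition approx_err {F : Type} (d : F -> F -> R) (C : F -> Prop)
    (Sigma : nat -> F -> Prop) (M : nat) : Rbar :=
  Rbar_lub (fun r => exists f, C f /\ r = dist_to d f (Sigma M)).

Definition approx_rate {F : Type} (d : F -> F -> R) (C : F -> Prop)
    (Sigma : nat -> F -> Prop) (g : R) : Prop :=
  exists c : R, exists M0 : nat, forall M : nat, (1 <= M)%nat -> (M0 <= M)%nat ->
    Rbar_le (Rbar_abs (approx_err d C Sigma M)) (Finite (c * Rpower (INR M) (- g))).

(* gamma^*(C | Sigma) in [-oo, oo]; Lub_Rbar of the empty set is -oo *)
Definition approx_speed {F : Type} (d : F -> F -> R) (C : F -> Prop)
    (Sigma : nat -> F -> Prop) : Rbar :=
  Lub_Rbar (fun g => approx_rate d C Sigma g).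

Definition is_covering {F : Type} (d : F -> F -> R) (A : F -> Prop)
    (eps : R) (X : list F) : Prop :=
  NoDup X /\ (forall x, In x X -> A x) /\
  (forall f, A f -> exists x, In x X /\ d f x <= eps).

(* N(A,d,eps): minimal size of an eps-covering, +oo if none *)
Definition covering_number {F : Type} (d : F -> F -> R) (A : F -> Prop)
    (eps : R) : Rbar :=
  Rbar_glb (fun r => exists X, is_covering d A eps X /\ r = Finite (INR (length X))).

Definition entropy {F : Type} (d : F -> F -> R) (A : F -> Prop) (eps : R) : Rbar :=
  match covering_number d A eps with
  | Finite n => Finite (log2 n)
  | p_infty => p_infty
  | m_infty => m_infty
  end.

Definition entropy_rate {F : Type} (d : F -> F -> R) (C : F -> Prop) (g : R) : Prop :=
  exists c : R, exists eps0 : R, 0 < eps0 /\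
    forall eps : R, 0 < eps < eps0 ->
      Rbar_le (Rbar_abs (entropy d C eps)) (Finite (c * Rpower eps (- (1 / g)))).

Definition encoding_speed {F : Type} (d : F -> F -> R) (C : F -> Prop) : Rbar :=
  let S := fun g => 0 < g /\ entropy_rate d C g in
  if excluded_middle_informative (exists g, S g) then Lub_Rbar S else Finite 0.

Definition is_encoding {F : Type} (d : F -> F -> R) (Sigma : nat -> F -> Prop)
    (g h : R) (E : nat -> list F) : Prop :=
  exists c1 c2 : R, 0 < c1 /\ 0 < c2 /\
    forall M : nat, (1 <= M)%nat ->
      is_covering d (Sigma M) (c1 * Rpower (INR M) (- g)) (E M) /\
      log2 (INR (length (E M))) <= c2 * Rpower (INR M) (1 + h).

Definition encodable {F : Type} (d : F -> F -> R) (Sigma : nat -> F -> Prop)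
    (g : R) : Prop :=
  forall h : R, 0 < h -> exists E, is_encoding d Sigma g h E.

Definition encodable_bar {F : Type} (d : F -> F -> R) (Sigma : nat -> F -> Prop)
    (g : Rbar) : Prop :=
  match g with
  | Finite r => encodable d Sigma r
  | p_infty => forall r : R, 0 < r -> encodable d Sigma r
  | m_infty => False
  end.

(* If C lies within c M^(-r) of Sigma_M and Sigma_M has a (c1 M^(-r))-net of
   at most 2^(c2 M^(1+h)) points, moving the net points onto C gives a covering
   of C at scale ~ M^(-r) with no more points.  Taking M ~ eps^(-1/r) yields
   H(C, eps) = O(eps^(-(1+h)/r)), i.e. an encoding speed of at least r/(1+h);
   any x below min(gamma^*, gamma) is reached by some admissible r > x and
   h = r/x - 1. *)

From Stdlib Require Import Reals ZArith Lra Lia List Classical ClassicalEpsilon.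
From Coquelicot Require Import Coquelicot.
Open Scope R_scope.
Set Bullet Behavior "Strict Subproofs".

Lemma Rpower_gt0 x y : 0 < Rpower x y.
Proof. apply exp_pos. Qed.

Lemma exists_INR_between t : 0 <= t -> exists n : nat, t <= INR n <= t + 1.
Proof.
  intros Ht. destruct (archimed t) as [A B].
  assert (Hz : (0 <= up t)%Z) by (apply le_IZR; simpl; lra).
  exists (Z.to_nat (up t)). rewrite INR_IZR_INZ, Z2Nat.id by exact Hz. lra.
Qed.

Lemma Rpower_div K eps a : 0 < K -> 0 < eps ->
  Rpower (K / eps) a = Rpower K a * Rpower eps (- a).
Proof.
  intros HK He. unfold Rpower, Rdiv. rewrite <- exp_plus, ln_mult, ln_Rinv; try lra.
  - f_equal. ring.
  - apply Rinv_0_lt_compat; lra.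
Qed.

Lemma exists_nat_rpower_scale (K r s eps : R) (M1 : nat) :
  0 < r -> 0 <= s -> 1 <= INR M1 -> 0 < eps < K ->
  exists M, (M1 <= M)%nat /\ K * Rpower (INR M) (- r) <= eps /\
    Rpower (INR M) s <= Rpower (2 + INR M1) s * Rpower K (s / r) * Rpower eps (- (s / r)).
Proof.
  intros Hr Hs HM1 [He HeK].
  (* The witness is M = ceil((K/eps)^(1/r)) + M1. *)
  set (q := K / eps).
  assert (Hq1 : 1 < q) by (unfold q; apply (Rmult_lt_reg_r eps); [lra|]; field_simplify; lra).
  set (t := Rpower q (1 / r)).
  assert (Ht1 : 1 <= t).
  { rewrite <- (Rpower_O q) by lra. apply Rle_Rpower; [lra|].
    unfold Rdiv. apply Rmult_le_pos; [lra|left; apply Rinv_0_lt_compat; lra]. }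
  assert (Htr : Rpower t r = q).
  { unfold t. rewrite Rpower_mult. replace (1 / r * r) with 1 by (field; lra).
    apply Rpower_1; lra. }
  destruct (exists_INR_between t) as [n [Hn1 Hn2]]; [lra|].
  exists (n + M1)%nat. rewrite plus_INR. split; [lia|split].
  - rewrite Rpower_Ropp.
    assert (Hqle : q <= Rpower (INR n + INR M1) r) by (rewrite <- Htr; apply Rle_Rpower_l; lra).
    replace eps with (K / q) by (unfold q; field; lra).
    unfold Rdiv. apply Rmult_le_compat_l; [lra|]. apply Rinv_le_contravar; lra.
  - rewrite Rmult_assoc, <- Rpower_div by lra. fold q.
    replace (s / r) with (1 / r * s) by (field; lra). rewrite <- Rpower_mult. fold t.
    rewrite Rpower_mult_distr by lra. apply Rle_Rpower_l; [lra|]. nra.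
Qed.

Lemma ln2_gt0 : 0 < ln 2.
Proof. pose proof ln_lt_2. lra. Qed.

Lemma log2_le x y : 0 < x -> x <= y -> log2 x <= log2 y.
Proof.
  intros Hx Hxy. unfold log2, Rdiv. apply Rmult_le_compat_r.
  - left; apply Rinv_0_lt_compat, ln2_gt0.
  - apply ln_le; assumption.
Qed.

Lemma log2_ge0 x : 1 <= x -> 0 <= log2 x.
Proof.
  intros Hx. replace 0 with (log2 1) by (unfold log2, Rdiv; rewrite ln_1; ring).
  apply log2_le; lra.
Qed.

Lemma Rbar_glb_correct (E : Rbar -> Prop) : Rbar_is_glb E (Rbar_glb E).
Proof. unfold Rbar_glb. destruct (Rbar_ex_glb E); auto. Qed.

Lemma Rbar_lub_correct (E : Rbar -> Prop) : Rbar_is_lub E (Rbar_lub E).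
Proof. unfold Rbar_lub. destruct (Rbar_ex_lub E); auto. Qed.

Lemma Rbar_le_abs (x : Rbar) (a : R) :
  Rbar_le (Rbar_abs x) (Finite a) -> Rbar_le x (Finite a).
Proof.
  destruct x as [x| |]; simpl; auto.
  intros H. pose proof (Rle_abs x). lra.
Qed.

Section Covering.

Variables (F : Type) (d : F -> F -> R).

Lemma is_covering_le (A : F -> Prop) (eps eps' : R) (X : list F) :
  eps <= eps' -> is_covering d A eps X -> is_covering d A eps' X.
Proof.
  intros Hle [ND [Sub Cov]]. split; [exact ND|split; [exact Sub|]].
  intros f Af. destruct (Cov f Af) as [x [Ix Dx]]. exists x; split; [exact Ix|lra].
Qed.

Lemma dist_to_le_near (S : F -> Prop) (f : F) (a delta : R) :
  0 < delta -> Rbar_le (dist_to d f S) (Finite a) ->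
  exists Phi, S Phi /\ d f Phi <= a + delta.
Proof.
  intros Hdelta Hf. apply NNPP; intro Hfar.
  destruct (Rbar_glb_correct (fun r => exists Phi, S Phi /\ r = Finite (d f Phi))) as [_ Hglb].
  assert (Hlb : Rbar_le (Finite (a + delta)) (dist_to d f S)).
  { apply Hglb. intros x [Phi [HPhi ->]]. simpl.
    destruct (Rle_dec (d f Phi) (a + delta)); [exfalso; apply Hfar; eauto|lra]. }
  pose proof (Rbar_le_trans _ _ _ Hlb Hf) as Hcontra. simpl in Hcontra. lra.
Qed.

Lemma approx_err_le_near (C : F -> Prop) (Sigma : nat -> F -> Prop) (M : nat) (a delta : R) f :
  0 < delta -> C f -> Rbar_le (approx_err d C Sigma M) (Finite a) ->
  exists Phi, Sigma M Phi /\ d f Phi <= a + delta.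
Proof.
  intros Hdelta Cf Ha. apply dist_to_le_near; [exact Hdelta|].
  eapply Rbar_le_trans; [|exact Ha].
  apply (Rbar_lub_correct (fun r => exists f, C f /\ r = dist_to d f (Sigma M))).
  exists f; auto.
Qed.

(* Replace each point of an external net [L] that is eps-close to [C] by such
   a point of [C]; symmetry of [d] is all that is needed. *)
Lemma internal_net (C : F -> Prop) (eps : R) (L : list F) :
  (forall x y, d x y = d y x) ->
  exists X, NoDup X /\ (forall x, In x X -> C x) /\ (length X <= length L)%nat /\
    forall x, In x L -> forall f, C f -> d f x <= eps -> exists y, In y X /\ d x y <= eps.
Proof.
  intros Hsym. induction L as [|a L IH].
  - exists nil. split; [apply NoDup_nil|]. split; [intros x []|]. split; [simpl; lia|].
    intros x [].
  - destruct IH as [X [ND [Sub [Len Near]]]].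
    destruct (classic (exists f, C f /\ d f a <= eps)) as [[y [Cy Hy]]|Hfar].
    + destruct (classic (In y X)) as [Iy|Iy].
      * exists X. repeat split; auto; [simpl; lia|].
        intros x [<-|Ix] f Cf Hf; [|eauto].
        exists y; split; [exact Iy|]. rewrite Hsym; exact Hy.
      * exists (y :: X). repeat split.
        -- constructor; auto.
        -- intros x [<-|Ix]; auto.
        -- simpl; lia.
        -- intros x [<-|Ix] f Cf Hf.
           ++ exists y; split; [left; reflexivity|]. rewrite Hsym; exact Hy.
           ++ destruct (Near x Ix f Cf Hf) as [z [Iz Dz]]. exists z; split; [right|]; auto.
    + exists X. repeat split; auto; [simpl; lia|].
      intros x [<-|Ix] f Cf Hf; [exfalso; eauto|eauto].
Qed.

Lemma covering_of_net (C S : F -> Prop) (a rho : R) (L : list F) :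
  is_metric d ->
  (forall f, C f -> exists Phi, S Phi /\ d f Phi <= a) ->
  is_covering d S rho L ->
  exists X, is_covering d C (2 * (a + rho)) X /\ (length X <= length L)%nat.
Proof.
  intros [_ [_ [Hsym Htri]]] Hnear [_ [_ Hnet]].
  destruct (internal_net C (a + rho) L Hsym) as [X [ND [Sub [Len Near]]]].
  exists X. split; [|exact Len]. split; [exact ND|split; [exact Sub|]].
  intros f Cf.
  destruct (Hnear f Cf) as [Phi [SPhi Dfphi]].
  destruct (Hnet Phi SPhi) as [x [Ix Dphix]].
  assert (Dfx : d f x <= a + rho) by (pose proof (Htri f Phi x); lra).
  destruct (Near x Ix f Cf Dfx) as [y [Iy Dxy]].
  exists y. split; [exact Iy|]. pose proof (Htri f x y). lra.
Qed.

Lemma covering_length_ge1 (A : F -> Prop) (eps : R) (X : list F) f :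
  A f -> is_covering d A eps X -> 1 <= INR (length X).
Proof.
  intros Af [_ [_ Cov]]. destruct (Cov f Af) as [y [Iy _]].
  destruct X as [|z X]; [destruct Iy|]. simpl length. rewrite S_INR.
  pose proof (pos_INR (length X)). lra.
Qed.

Lemma entropy_le_log2_length (C : F -> Prop) (eps : R) (X : list F) f :
  C f -> is_covering d C eps X ->
  Rbar_le (Rbar_abs (entropy d C eps)) (Finite (log2 (INR (length X)))).
Proof.
  intros Cf HX.
  destruct (Rbar_glb_correct (fun r => exists X, is_covering d C eps X /\ r = Finite (INR (length X))))
    as [Hlb Hglb].
  assert (Hup : Rbar_le (covering_number d C eps) (Finite (INR (length X)))).
  { apply Hlb. exists X; auto. }
  assert (Hlow : Rbar_le (Finite 1) (covering_number d C eps)).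
  { apply Hglb. intros r [Y [HY ->]]. exact (covering_length_ge1 C eps Y f Cf HY). }
  unfold entropy. destruct (covering_number d C eps) as [n| |]; simpl in *; try contradiction.
  rewrite Rabs_right by (apply Rle_ge, log2_ge0; lra).
  apply log2_le; lra.
Qed.

Lemma entropy_le_log2_net (C S : F -> Prop) (a rho eps : R) (L : list F) f :
  is_metric d -> C f ->
  (forall f, C f -> exists Phi, S Phi /\ d f Phi <= a) ->
  is_covering d S rho L -> 2 * (a + rho) <= eps ->
  Rbar_le (Rbar_abs (entropy d C eps)) (Finite (log2 (INR (length L)))).
Proof.
  intros Hd Cf Hnear HL Heps.
  destruct (covering_of_net C S a rho L Hd Hnear HL) as [X [HX Len]].
  eapply Rbar_le_trans.
  { apply (entropy_le_log2_length C eps X f Cf), (is_covering_le C _ _ X Heps HX). }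
  simpl. pose proof (covering_length_ge1 C _ X f Cf HX).
  apply log2_le; [lra|apply le_INR, Len].
Qed.

End Covering.

Section Rates.

Variables (F : Type) (d : F -> F -> R) (C : F -> Prop) (Sigma : nat -> F -> Prop).

Lemma entropy_rate_of_encoding (r h : R) (E : nat -> list F) :
  is_metric d -> (exists f, C f) -> 0 < r -> 0 < h ->
  approx_rate d C Sigma r -> is_encoding d Sigma r h E ->
  entropy_rate d C (r / (1 + h)).
Proof.
  intros Hd [f0 Cf0] Hr Hh [c [M0 Happrox]] [c1 [c2 [Hc1 [Hc2 Henc]]]].
  set (K := 2 * (Rabs c + 1 + c1)).
  assert (HK : 0 < K) by (unfold K; pose proof (Rabs_pos c); lra).
  set (M1 := Nat.max 1 M0).
  assert (HM1 : 1 <= INR M1) by (apply (le_INR 1); unfold M1; lia).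
  exists (c2 * Rpower (2 + INR M1) (1 + h) * Rpower K ((1 + h) / r)), K.
  split; [exact HK|]. intros eps Heps.
  destruct (exists_nat_rpower_scale K r (1 + h) eps M1 Hr ltac:(lra) HM1 Heps)
    as [M [HM [Hsmall Hbig]]].
  assert (HM' : (1 <= M)%nat) by (unfold M1 in HM; lia).
  set (p := Rpower (INR M) (- r)) in *.
  assert (Hp : 0 < p) by apply Rpower_gt0.
  destruct (Henc M HM') as [Hcov Hlog]. fold p in Hcov.
  assert (Hnear : forall f, C f -> exists Phi, Sigma M Phi /\ d f Phi <= Rabs c * p + p).
  { intros f Cf.
    destruct (approx_err_le_near F d C Sigma M (c * p) p f Hp Cf) as [Phi [SPhi DPhi]].
    - apply Rbar_le_abs, Happrox; [exact HM'|unfold M1 in HM; lia].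
    - exists Phi. split; [exact SPhi|]. pose proof (Rle_abs c). nra. }
  eapply Rbar_le_trans.
  { apply (entropy_le_log2_net F d C (Sigma M) _ _ eps (E M) f0 Hd Cf0 Hnear Hcov).
    replace (2 * (Rabs c * p + p + c1 * p)) with (K * p) by (unfold K; ring). exact Hsmall. }
  simpl. replace (1 / (r / (1 + h))) with ((1 + h) / r) by (field; lra).
  eapply Rle_trans; [exact Hlog|].
  rewrite !Rmult_assoc. apply Rmult_le_compat_l; [lra|]. rewrite <- Rmult_assoc. exact Hbig.
Qed.

Lemma entropy_rate_of_encodable (x r : R) :
  is_metric d -> (exists f, C f) -> 0 < x < r ->
  approx_rate d C Sigma r -> encodable d Sigma r -> entropy_rate d C x.
Proof.
  intros Hd HC [Hx Hxr] Hrate Henc.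
  assert (Hh : 0 < r / x - 1).
  { replace (r / x - 1) with ((r - x) / x) by (field; lra). apply Rdiv_lt_0_compat; lra. }
  destruct (Henc _ Hh) as [E HE].
  replace x with (r / (1 + (r / x - 1))) by (field; lra).
  exact (entropy_rate_of_encoding r _ E Hd HC ltac:(lra) Hh Hrate HE).
Qed.

Lemma approx_rate_antimono (g r : R) :
  approx_rate d C Sigma g -> r <= g -> approx_rate d C Sigma r.
Proof.
  intros [c [M0 Hc]] Hr. exists (Rabs c), M0. intros M HM1 HM0.
  eapply Rbar_le_trans; [exact (Hc M HM1 HM0)|]. simpl.
  pose proof (Rpower_gt0 (INR M) (- g)).
  apply Rle_trans with (Rabs c * Rpower (INR M) (- g)).
  - apply Rmult_le_compat_r; [lra|apply Rle_abs].
  - apply Rmult_le_compat_l; [apply Rabs_pos|].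
    apply Rle_Rpower; [apply (le_INR 1), HM1|lra].
Qed.

Lemma encodable_antimono (g r : R) :
  encodable d Sigma g -> r <= g -> encodable d Sigma r.
Proof.
  intros Henc Hr h Hh. destruct (Henc h Hh) as [E [c1 [c2 [Hc1 [Hc2 HE]]]]].
  exists E, c1, c2. split; [exact Hc1|split; [exact Hc2|]]. intros M HM.
  destruct (HE M HM) as [Hcov Hlog]. split; [|exact Hlog].
  apply (is_covering_le F d _ (c1 * Rpower (INR M) (- g))), Hcov.
  apply Rmult_le_compat_l; [lra|]. apply Rle_Rpower; [apply (le_INR 1), HM|lra].
Qed.

Lemma encodable_bar_lt (gamma : Rbar) (x g : R) :
  encodable_bar d Sigma gamma -> Rbar_lt (Finite x) gamma ->
  approx_rate d C Sigma g -> 0 < x < g ->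
  exists r, x < r /\ approx_rate d C Sigma r /\ encodable d Sigma r.
Proof.
  intros Henc Hxgamma Hg [Hx Hxg]. destruct gamma as [gv| |]; simpl in Henc, Hxgamma.
  - exists (Rmin g gv). split; [apply Rmin_glb_lt; assumption|split].
    + apply (approx_rate_antimono g); [exact Hg|apply Rmin_l].
    + apply (encodable_antimono gv); [exact Henc|apply Rmin_r].
  - exists g. split; [exact Hxg|split; [exact Hg|]]. apply Henc; lra.
  - contradiction.
Qed.

Lemma approx_speed_gt (x : R) :
  Rbar_lt (Finite x) (approx_speed d C Sigma) ->
  exists g, approx_rate d C Sigma g /\ x < g.
Proof.
  intros Hx. apply NNPP; intro Hnone.
  apply (Rbar_lt_not_le _ _ Hx), (proj2 (Lub_Rbar_correct _)).
  intros g Hg. simpl. apply Rnot_lt_le. intros Hxg. apply Hnone. eauto.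
Qed.

Lemma encoding_speed_ge (x : R) :
  0 < x -> entropy_rate d C x -> Rbar_le (Finite x) (encoding_speed d C).
Proof.
  intros Hx Hrate. unfold encoding_speed.
  destruct (excluded_middle_informative _) as [_|Hnone].
  - apply (proj1 (Lub_Rbar_correct _)). split; assumption.
  - exfalso. apply Hnone. eauto.
Qed.

Lemma encoding_speed_ge0 : Rbar_le (Finite 0) (encoding_speed d C).
Proof.
  unfold encoding_speed. destruct (excluded_middle_informative _) as [[g [Hg Hrate]]|_].
  - apply Rbar_le_trans with (Finite g); [simpl; lra|].
    apply (proj1 (Lub_Rbar_correct _)). split; assumption.
  - simpl; lra.
Qed.

End Rates.

Lemma Rbar_le_of_pos_lt (m e : Rbar) :
  Rbar_le (Finite 0) e ->
  (forall x : R, 0 < x -> Rbar_lt (Finite x) m -> Rbar_le (Finite x) e) ->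
  Rbar_le m e.
Proof.
  intros He Hlt. destruct m as [m| |]; destruct e as [e| |]; simpl in *; try tauto.
  - apply Rnot_lt_le. intros Hem.
    pose proof (Hlt ((e + m) / 2) ltac:(lra) ltac:(lra)). simpl in *. lra.
  - pose proof (Hlt (e + 1) ltac:(lra) I). simpl in *. lra.
Qed.

Theorem mainTheorem8 (F : Type) (d : F -> F -> R) (gamma : Rbar)
    (Sigma : nat -> F -> Prop) :
  is_metric d ->
  Rbar_lt (Finite 0) gamma ->
  (forall M : nat, (1 <= M)%nat -> exists Phi, Sigma M Phi) ->
  encodable_bar d Sigma gamma ->
  forall C : F -> Prop, (exists f, C f) ->
    Rbar_le (Rbar_min (approx_speed d C Sigma) gamma) (encoding_speed d C).
Proof.
  intros Hd _ _ Henc C HC.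
  apply Rbar_le_of_pos_lt; [apply encoding_speed_ge0|]. intros x Hx Hlt.
  destruct (approx_speed_gt F d C Sigma x) as [g [Hg Hxg]].
  { exact (Rbar_lt_le_trans _ _ _ Hlt (Rbar_min_l _ _)). }
  destruct (encodable_bar_lt F d C Sigma gamma x g Henc) as [r [Hxr [Hr Henc_r]]];
    [exact (Rbar_lt_le_trans _ _ _ Hlt (Rbar_min_r _ _))|exact Hg|split; assumption|].
  apply encoding_speed_ge; [exact Hx|].
  exact (entropy_rate_of_encodable F d C Sigma x r Hd HC (conj Hx Hxr) Hr Henc_r).
Qed.
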